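(* Let $(S,\mathcal{E})$ be a qualitative evidence frame and let $\mathfrak{F}$ be a set of evidence allocation functions on $(S,\mathcal{E})$. Define $d:2^{\mathcal{E}}\to\tau_{\mathcal{E}}$ by $d(\emptyset)=S$ and, for $\mathbf{E}\neq\emptyset$, $d(\mathbf{E})=\min(\mathrm{dense}(\mathbf{E}),\subseteq)$, the least (w.r.t. inclusion) element of $\tau_{\mathbf{E}}$ that is dense in $\bigcup\mathbf{E}$ w.r.t. $\tau_{\mathbf{E}}$ (such a least element exists). Then $\mathfrak{F}\cup\{d\}$ is a set of evidence allocation functions on $(S,\mathcal{E})$.
   Context: A qualitative evidence frame is a pair $(S,\mathcal{E})$ where $S$ is a finite nonempty set and $\mathcal{E}$ is a nonempty family of subsets of $S$ with $\emptyset\notin\mathcal{E}$ and $S\notin\mathcal{E}$. For any family $\mathbf{E}\subseteq 2^S$, $\tau_{\mathbf{E}}$ denotes the topology on $S$ generated by $\mathbf{E}$ (as a subbasis): it consists of $\emptyset$, $S$, all finite intersections of members of $\mathbf{E}$, and all arbitrary unions of such finite intersections. For $\mathbf{E}\subseteq\mathcal{E}$, an element $D\in\tau_{\mathbf{E}}$ is called dense in $\bigcup\mathbf{E}$ w.r.t. $\tau_{\mathbf{E}}$ if $D\cap T\neq\emptyset$ for every nonempty $T\in\tau_{\mathbf{E}}$; $\mathrm{dense}(\mathbf{E})$ is the set of such elements. A set of evidence allocation functions on $(S,\mathcal{E})$ is a set $\mathfrak{F}$ of functions $2^{\mathcal{E}}\to\tau_{\mathcal{E}}$ such that for all $f,g\in\mathfrak{F}$: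 (1) $f(\emptyset)=S$; (2) for every nonempty $\mathbf{E}\subseteq\mathcal{E}$, either $f(\mathbf{E})=\emptyset$, or $f(\mathbf{E})\in\tau_{\mathbf{E}}$ and $f(\mathbf{E})$ is dense in $\bigcup\mathbf{E}$ w.r.t. $\tau_{\mathbf{E}}$; (3) for every $\mathbf{E}\subseteq\mathcal{E}$, $f(\mathbf{E})\subseteq g(\mathbf{E})$ or $g(\mathbf{E})\subseteq f(\mathbf{E})$. *)

From mathcomp Require Import all_boot.
Set Implicit Arguments. Unset Strict Implicit. Unset Printing Implicit Defensive.

Section QEF.
Variable S : finType.

Definition qe_frame (E : {set {set S}}) : Prop :=
  [/\ 0 < #|S|, E != set0, set0 \notin E & setT \notin E].

Definition fin_inters (F : {set {set S}}) : {set {set S}} :=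
  [set \bigcap_(A in G) A | G : {set {set S}} in powerset F & G != set0].

(* topology generated by F as a subbasis: set0, setT, finite intersections,
   and (arbitrary = finite, S being finite) unions of finite intersections *)
Definition tau (F : {set {set S}}) : {set {set S}} :=
  set0 |: (setT |: [set \bigcup_(B in H) B | H : {set {set S}} in powerset (fin_inters F)]).

Definition dense (F : {set {set S}}) : {set {set S}} :=
  [set D in tau F | [forall T in tau F, (T != set0) ==> (D :&: T != set0)]].

(* A set of evidence allocation functions on (S, E); functions 2^E -> tau E
   are modelled as total maps on {set {set S}}, constrained on subsets of E. *)
Definition eaf_set (E : {set {set S}})
    (Fs : ({set {set S}} -> {set S}) -> Prop) : Prop :=
  forall f g, Fs f -> Fs g ->
    [/\ (forall F : {set {set S}}, F \subset E -> f F \in tau E),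
        f set0 = setT,
        (forall F : {set {set S}}, F \subset E -> F != set0 ->
           f F = set0 \/ (f F \in tau F /\ f F \in dense F))
      & (forall F : {set {set S}}, F \subset E -> f F \subset g F \/ g F \subset f F)].

(* d(empty) = S; d(F) = the least element of dense(F) w.r.t. inclusion
   (setT is only a dummy default, never used once existence is shown). *)
Definition dmin (F : {set {set S}}) : {set S} :=
  if F == set0 then setT
  else odflt setT
    [pick D in dense F | [forall D', (D' \in dense F) ==> (D \subset D')]].

End QEF.

From mathcomp Require Import all_boot.
Set Implicit Arguments. Unset Strict Implicit. Unset Printing Implicit Defensive.

(* The topology tau_F is closed under binary intersections, and so are its
   dense elements: if D1, D2 are dense and T is a nonempty open set, then
   D2 :&: T is a nonempty open set, which D1 therefore meets.  As S is finite,
   the intersection of all dense open sets is thus the least one, so d(F) is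
   dense and lies below every dense open set.  Every allocated value f(F) is
   either empty (below d(F)) or dense (above d(F)), which gives the
   comparability axiom; the other axioms hold for d as d(F) is dense. *)

Section GeneratedTopology.
Variable S : finType.
Implicit Types (F E H : {set {set S}}) (A B X Y D : {set S}).

Lemma fin_inters_mono F E : F \subset E -> fin_inters F \subset fin_inters E.
Proof.
move=> FE; apply/subsetP => Y /imsetP[G]; rewrite inE => /andP[GF G0] ->.
apply/imsetP; exists G => //; rewrite inE G0 andbT.
by rewrite powersetE (subset_trans _ FE) // -powersetE.
Qed.

Lemma fin_intersI F A B :
  A \in fin_inters F -> B \in fin_inters F -> A :&: B \in fin_inters F.
Proof.
case/imsetP=> G1; rewrite inE powersetE => /andP[G1F G10] ->.
case/imsetP=> G2; rewrite inE powersetE => /andP[G2F G20] ->.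
rewrite -bigcap_setU; apply/imsetP; exists (G1 :|: G2) => //.
by rewrite inE powersetE subUset G1F G2F setU_eq0 negb_and G10.
Qed.

Lemma set0_tau F : set0 \in tau F.
Proof. by rewrite !in_setU1 eqxx. Qed.

Lemma setT_tau F : setT \in tau F.
Proof. by rewrite !in_setU1 eqxx orbT. Qed.

Lemma bigcup_tau F H : H \subset fin_inters F -> \bigcup_(B in H) B \in tau F.
Proof. by move=> HF; rewrite !in_setU1 imset_f ?orbT // powersetE. Qed.

Lemma tau_mono F E : F \subset E -> tau F \subset tau E.
Proof.
move=> FE; apply/subsetP => X.
case/setU1P=> [->|/setU1P[->|/imsetP[H HF ->]]]; rewrite ?set0_tau ?setT_tau //.
by apply: bigcup_tau; rewrite (subset_trans _ (fin_inters_mono FE)) -?powersetE.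
Qed.

Lemma setI_bigcup H1 H2 :
  (\bigcup_(B in H1) B) :&: (\bigcup_(C in H2) C) =
  \bigcup_(D in [set B :&: C | B in H1, C in H2]) D.
Proof.
apply/setP=> x; rewrite inE; apply/andP/bigcupP.
  case=> /bigcupP[B HB xB] /bigcupP[C HC xC].
  by exists (B :&: C); [apply/imset2P; exists B C | rewrite inE xB xC].
case=> _ /imset2P[B C HB HC ->]; rewrite inE => /andP[xB xC].
by split; apply/bigcupP; [exists B | exists C].
Qed.

Lemma tauI F X Y : X \in tau F -> Y \in tau F -> X :&: Y \in tau F.
Proof.
case/setU1P=> [->|/setU1P[->|/imsetP[H1 H1F ->]]] Yt.
- by rewrite set0I set0_tau.
- by rewrite setTI.
case/setU1P: Yt => [->|/setU1P[->|/imsetP[H2 H2F ->]]].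
- by rewrite setI0 set0_tau.
- by rewrite setIT bigcup_tau -?powersetE.
rewrite setI_bigcup; apply: bigcup_tau; apply/subsetP => _ /imset2P[B C HB HC ->].
by apply: fin_intersI; [move: H1F | move: H2F]; rewrite powersetE => /subsetP; apply.
Qed.

Lemma denseP F D :
  reflect (D \in tau F /\ {in tau F, forall T, T != set0 -> D :&: T != set0})
          (D \in dense F).
Proof.
rewrite [D \in dense F]inE; apply: (iffP andP) => -[Dt Dm]; split=> //.
  by move=> T Tt; apply/implyP/(forall_inP Dm).
by apply/forall_inP => T Tt; apply/implyP/Dm.
Qed.

Lemma dense_tau F D : D \in dense F -> D \in tau F.
Proof. by case/denseP. Qed.

Lemma setT_dense F : setT \in dense F.
Proof. by apply/denseP; split=> [|T _]; rewrite ?setT_tau ?setTI. Qed.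

Lemma denseI F D1 D2 : D1 \in dense F -> D2 \in dense F -> D1 :&: D2 \in dense F.
Proof.
move=> /denseP[D1t D1m] /denseP[D2t D2m]; apply/denseP; split=> [|T Tt T0].
  exact: tauI.
by rewrite -setIA; apply: D1m; [apply: tauI | apply: D2m].
Qed.

Lemma least_dense F :
  exists2 D, D \in dense F & {in dense F, forall D', D \subset D'}.
Proof.
exists (\bigcap_(D in dense F) D) => [|D' D'd]; last exact: bigcap_inf.
apply: (big_ind (fun X => X \in dense F)) => //; [exact: setT_dense | exact: denseI].
Qed.

End GeneratedTopology.

Section LeastDenseAllocation.
Variables (S : finType) (E : {set {set S}}).
Implicit Types F : {set {set S}}.

Definition allocation (f : {set {set S}} -> {set S}) : Prop :=
  [/\ forall F, F \subset E -> f F \in tau E,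
      f set0 = setT &
      forall F, F \subset E -> F != set0 ->
        f F = set0 \/ (f F \in tau F /\ f F \in dense F)].

Lemma eaf_set_allocation Fs f : eaf_set E Fs -> Fs f -> allocation f.
Proof. by move=> HFs Hf; case: (HFs f f Hf Hf). Qed.

Lemma dmin0 : dmin set0 = setT :> {set S}.
Proof. by rewrite /dmin eqxx. Qed.

Lemma dmin_least F :
  F != set0 -> dmin F \in dense F /\ {in dense F, forall D : {set S}, dmin F \subset D}.
Proof.
rewrite /dmin => /negbTE ->; case: pickP => [D /andP[Dd /forall_inP Dmin] | nomin].
  by split=> // D' /Dmin.
have [D Dd Dmin] := least_dense F.
by move: (nomin D); rewrite Dd /= => /forall_inP[].
Qed.

Lemma dmin_allocation : allocation (@dmin S).
Proof.
split=> [F FE | | F _ F0].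
- have [->|F0] := eqVneq F set0; first by rewrite dmin0 setT_tau.
  have [Dd _] := dmin_least F0.
  by apply: (subsetP (tau_mono FE)); rewrite dense_tau.
- exact: dmin0.
- by have [Dd _] := dmin_least F0; right; rewrite dense_tau.
Qed.

Lemma allocation_dmin_comparable f F :
  allocation f -> F \subset E -> dmin F \subset f F \/ f F \subset dmin F.
Proof.
case=> _ _ f_dense FE; have [->|F0] := eqVneq F set0.
  by right; rewrite dmin0 subsetT.
case: (f_dense F FE F0) => [->|[_ fd]]; first by right; apply: sub0set.
by left; apply: (dmin_least F0).2.
Qed.

End LeastDenseAllocation.

Theorem proposition3 (S : finType) (E : {set {set S}})
    (Fs : ({set {set S}} -> {set S}) -> Prop) :
  qe_frame E -> eaf_set E Fs ->
  eaf_set E (fun h => Fs h \/ h = @dmin S).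
Proof.
move=> _ HFs.
have alloc h : Fs h \/ h = @dmin S -> allocation E h.
  by case=> [/(eaf_set_allocation HFs) // | ->]; apply: dmin_allocation.
move=> f g Hf Hg; have fa := alloc f Hf; have ga := alloc g Hg.
have [? ? ?] := fa; split=> // F FE.
case: Hf Hg => [Hf|->] [Hg|->].
- by case: (HFs f g Hf Hg) => _ _ _; apply.
- by case: (allocation_dmin_comparable fa FE); [right|left].
- exact: allocation_dmin_comparable ga FE.
- by left.
Qed.
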